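(* Suppose one trial with success probability $p\in(0,1)$ is performed and results in success (i.e. $X=1$ with $X\sim B(1,p)$). Put on $p$ the triangle prior with mode $\alpha\in(0,1)$, $$\pi(p)=\begin{cases}\frac{2}{\alpha}p, & 0<p\le\alpha,\\ \frac{2}{1-\alpha}(1-p), & \alpha<p<1.\end{cases}$$ Then the posterior mean of $p$ is $g(\alpha)=\frac{1+\alpha+\alpha^2}{2(1+\alpha)}$, and the unique $\tau\in(0,1)$ satisfying $\tau=g(\tau)$ (the iterative limit obtained by repeatedly replacing the mode of the prior with the posterior mean) is $\tau=\frac{\sqrt5-1}{2}=1/\phi\approx 0.618$, where $\phi=\frac{1+\sqrt5}{2}$ is the Golden Ratio.
   Context: The posterior mean is the Bayes estimate of $p$ under quadratic loss. *)

From Stdlib Require Import Reals Lra.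
From Coquelicot Require Import Coquelicot.
Open Scope R_scope.

Definition triangle_prior (alpha p : R) : R :=
  if Rle_dec p 0 then 0
  else if Rle_dec p alpha then (2 / alpha) * p
  else if Rlt_dec p 1 then (2 / (1 - alpha)) * (1 - p)
  else 0.

Definition bernoulli_lik (x : nat) (p : R) : R := p ^ x * (1 - p) ^ (1 - x).

Definition posterior_mean (prior : R -> R) (x : nat) : R :=
  RInt (fun p => p * (bernoulli_lik x p * prior p)) 0 1 /
  RInt (fun p => bernoulli_lik x p * prior p) 0 1.

Definition g (alpha : R) : R := posterior_mean (triangle_prior alpha) 1.

Definition golden_ratio : R := (1 + sqrt 5) / 2.

(* After one success the likelihood is p, so both integrals defining g split at the mode alpha
   into integrals of polynomials: the evidence is (1 + alpha) / 3 and the first moment is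
   (1 + alpha + alpha^2) / 6.  The fixed-point equation tau = g tau then clears to
   tau^2 + tau - 1 = 0, whose root in (0,1) is (sqrt 5 - 1) / 2 = 1 / phi. *)
From Stdlib Require Import Reals Lra.
From Coquelicot Require Import Coquelicot.
Open Scope R_scope.

Lemma is_RInt_antiderivative (f F : R -> R) (a b : R) :
  (forall x, is_derive F x (f x)) -> (forall x, continuous f x) ->
  is_RInt f a b (F b - F a).
Proof. intros HF Hf; apply (is_RInt_derive F f); auto. Qed.

Lemma RInt_piecewise (h f1 f2 : R -> R) (a c b v1 v2 : R) :
  a < c < b ->
  (forall x, a < x < c -> h x = f1 x) ->
  (forall x, c < x < b -> h x = f2 x) ->
  is_RInt f1 a c v1 -> is_RInt f2 c b v2 ->
  RInt h a b = v1 + v2.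
Proof.
  intros Hc H1 H2 I1 I2.
  apply is_RInt_unique, (is_RInt_Chasles h a c b).
  - apply is_RInt_ext with f1; [|exact I1].
    rewrite Rmin_left, Rmax_right by lra; intros x Hx; symmetry; apply H1; lra.
  - apply is_RInt_ext with f2; [|exact I2].
    rewrite Rmin_left, Rmax_right by lra; intros x Hx; symmetry; apply H2; lra.
Qed.

Lemma triangle_prior_left (alpha p : R) :
  0 < p <= alpha -> triangle_prior alpha p = 2 / alpha * p.
Proof.
  intros Hp; unfold triangle_prior.
  destruct (Rle_dec p 0); [lra|]; destruct (Rle_dec p alpha); lra.
Qed.

Lemma triangle_prior_right (alpha p : R) :
  0 <= alpha < p -> p < 1 -> triangle_prior alpha p = 2 / (1 - alpha) * (1 - p).
Proof.
  intros Hp Hp1; unfold triangle_prior.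
  destruct (Rle_dec p 0); [lra|]; destruct (Rle_dec p alpha); [lra|].
  destruct (Rlt_dec p 1); lra.
Qed.

Lemma RInt_mul_triangle_prior (h Q1 Q2 : R -> R) (alpha : R) :
  0 < alpha < 1 ->
  (forall x, is_derive Q1 x (x * h x)) -> (forall x, continuous (fun x => x * h x) x) ->
  (forall x, is_derive Q2 x ((1 - x) * h x)) ->
  (forall x, continuous (fun x => (1 - x) * h x) x) ->
  RInt (fun p => h p * triangle_prior alpha p) 0 1 =
  2 / alpha * (Q1 alpha - Q1 0) + 2 / (1 - alpha) * (Q2 1 - Q2 alpha).
Proof.
  intros Ha HQ1 Hc1 HQ2 Hc2.
  apply (RInt_piecewise _ (fun x => 2 / alpha * (x * h x))
           (fun x => 2 / (1 - alpha) * ((1 - x) * h x)) 0 alpha 1); [exact Ha | | | |].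
  - intros x Hx; rewrite triangle_prior_left by lra; ring.
  - intros x Hx; rewrite triangle_prior_right by lra; ring.
  - apply (is_RInt_scal _ _ _ _ (_ - _)), is_RInt_antiderivative; assumption.
  - apply (is_RInt_scal _ _ _ _ (_ - _)), is_RInt_antiderivative; assumption.
Qed.

Ltac polynomial_continuity :=
  intros ?; apply (@ex_derive_continuous R_AbsRing R_NormedModule); auto_derive; auto.

Ltac polynomial_derivative := intros ?; auto_derive; [easy | field].

(* [:> R] pins the equation at [R] rather than at the normed-module carrier returned by
   [RInt], so that [field] recognizes it. *)
Lemma triangle_evidence_success (alpha : R) : 0 < alpha < 1 ->
  RInt (fun p => bernoulli_lik 1 p * triangle_prior alpha p) 0 1 = (1 + alpha) / 3 :> R.
Proof.
  intros Ha.
  rewrite (RInt_ext _ (fun p => p * triangle_prior alpha p))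
    by (intros x _; unfold bernoulli_lik; simpl; ring).
  rewrite (RInt_mul_triangle_prior (fun p => p) (fun x => x ^ 3 / 3)
             (fun x => x ^ 2 / 2 - x ^ 3 / 3));
    [field; lra | exact Ha | polynomial_derivative | polynomial_continuity
    | polynomial_derivative | polynomial_continuity].
Qed.

Lemma triangle_first_moment_success (alpha : R) : 0 < alpha < 1 ->
  RInt (fun p => p * (bernoulli_lik 1 p * triangle_prior alpha p)) 0 1 =
  (1 + alpha + alpha ^ 2) / 6 :> R.
Proof.
  intros Ha.
  rewrite (RInt_ext _ (fun p => (p * p) * triangle_prior alpha p))
    by (intros x _; unfold bernoulli_lik; simpl; ring).
  rewrite (RInt_mul_triangle_prior (fun p => p * p) (fun x => x ^ 4 / 4)
             (fun x => x ^ 3 / 3 - x ^ 4 / 4));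
    [field; lra | exact Ha | polynomial_derivative | polynomial_continuity
    | polynomial_derivative | polynomial_continuity].
Qed.

Lemma g_formula (alpha : R) : 0 < alpha < 1 ->
  g alpha = (1 + alpha + alpha ^ 2) / (2 * (1 + alpha)).
Proof.
  intros Ha; unfold g, posterior_mean.
  rewrite triangle_first_moment_success, triangle_evidence_success by exact Ha.
  field; lra.
Qed.

Lemma fixed_point_quadratic (tau : R) : -1 < tau ->
  tau = (1 + tau + tau ^ 2) / (2 * (1 + tau)) <-> tau ^ 2 + tau - 1 = 0.
Proof.
  intros Ht; split; intros E.
  - assert (E' : tau * (2 * (1 + tau)) = 1 + tau + tau ^ 2)
      by (rewrite E at 1; field; lra).
    lra.
  - field_simplify_eq; lra.
Qed.

Lemma sqrt5_bounds : sqrt 5 * sqrt 5 = 5 /\ 2 < sqrt 5 < 3.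
Proof.
  pose proof (sqrt_sqrt 5 ltac:(lra)); pose proof (sqrt_pos 5).
  split; [assumption | nra].
Qed.

Lemma golden_quadratic_root (tau : R) : 0 < tau ->
  tau ^ 2 + tau - 1 = 0 <-> tau = (sqrt 5 - 1) / 2.
Proof.
  destruct sqrt5_bounds as [H5 Hb]; intros Ht; split; intros E.
  - (* (2 tau + 1)^2 = 5 and 2 tau + 1 > 0 *)
    nra.
  - subst tau; nra.
Qed.

Lemma g_fixed_iff (tau : R) : 0 < tau < 1 ->
  tau = g tau <-> tau = (sqrt 5 - 1) / 2.
Proof.
  intros Ht; rewrite g_formula, fixed_point_quadratic by lra.
  apply golden_quadratic_root; lra.
Qed.

Lemma inv_golden_ratio : (sqrt 5 - 1) / 2 = 1 / golden_ratio.
Proof.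
  destruct sqrt5_bounds as [H5 Hb]; unfold golden_ratio.
  field_simplify_eq; nra.
Qed.

Theorem mainTheorem2 :
  (forall alpha : R, 0 < alpha < 1 ->
     g alpha = (1 + alpha + alpha ^ 2) / (2 * (1 + alpha))) /\
  (exists! tau : R, (0 < tau < 1) /\ tau = g tau) /\
  (forall tau : R, 0 < tau < 1 -> tau = g tau -> tau = (sqrt 5 - 1) / 2) /\
  (sqrt 5 - 1) / 2 = 1 / golden_ratio.
Proof.
  assert (Hroot : 0 < (sqrt 5 - 1) / 2 < 1) by (destruct sqrt5_bounds; lra).
  split; [exact g_formula|]; split; [|split].
  - exists ((sqrt 5 - 1) / 2); split.
    + split; [exact Hroot | apply g_fixed_iff; auto].
    + intros tau [Ht E]; symmetry; apply g_fixed_iff; auto.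
  - intros tau Ht; apply g_fixed_iff, Ht.
  - exact inv_golden_ratio.
Qed.
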